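(* Let $\Gamma$ be either (type II) $\Gamma^n_{i,j;\geq k}(\mathbb{L})$ with $0\leq k<\min\{i,j\}$ and $i+j\leq n-1$, or (type III) $\Gamma^n_{i,j;k}(\mathbb{L})$ with $-1\leq k<\min\{i,j\}$, $i+j\leq n-1$ and $|\mathbb{L}|\neq 2$. Then every $\Gamma$-round-up triple $\{J_1,J_2,J_3\}$ of $j$-spaces is a regular round-up triple, i.e. $J_1\cap J_2\cap J_3$ is a $(j-1)$-space and $\langle J_1,J_2,J_3\rangle$ is a $(j+1)$-space.
   Context: $\mathrm{PG}(n,\mathbb{L})$ is the projective space of an $(n+1)$-dimensional vector space over the skew field $\mathbb{L}$; an $m$-space is an $(m+1)$-dimensional vector subspace, and $\langle\cdot\rangle$ denotes the span. $\Gamma^n_{i,j;k}(\mathbb{L})$ is the bipartite graph with biparts the $i$-spaces and the $j$-spaces, an $i$-space adjacent to a $j$-space iff they meet in exactly a $k$-space; in $\Gamma^n_{i,j;\geq k}(\mathbb{L})$ adjacency means they meet in a subspace of dimension at least $k$. Here $i\le j$ is not assumed. A $\Gamma$-round-up triple is a set $\{J_1,J_2,J_3\}$ of three $j$-spaces such that no $i$-space is $\Gamma$-adjacent to exactly two of $J_1,J_2,J_3$, and some $i$-space is $\Gamma$-adjacent to all three. *)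

(* Projective geometry PG(n,L) over a skew field L, modelled
   as subspaces of the left vector space of row vectors 'rV[L]_(n.+1). *)
From HB Require Import structures.
From mathcomp Require Import all_boot all_order all_algebra.
Set Implicit Arguments. Unset Strict Implicit. Unset Printing Implicit Defensive.
Import Order.TTheory GRing.Theory Num.Theory.
Local Open Scope ring_scope.

Section PG.
Variables (L : unitRingType) (N : nat).
Local Notation V := 'rV[L]_N.

Definition skew_field := forall x : L, x != 0 -> x \is a GRing.unit.

Definition subspace (S : V -> Prop) :=
  [/\ S 0, forall x y, S x -> S y -> S (x + y) & forall (a : L) x, S x -> S (a *: x)].

Definition lin_indep d (v : 'I_d -> V) :=
  forall c : 'I_d -> L, \sum_(t < d) c t *: v t = 0 -> forall t, c t = 0.

Definition in_span d (v : 'I_d -> V) (x : V) :=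
  exists c : 'I_d -> L, x = \sum_(t < d) c t *: v t.

Definition has_vdim (d : nat) (S : V -> Prop) :=
  exists v : 'I_d -> V, lin_indep v /\ forall x, S x <-> in_span v x.

Definition is_pspace (m : int) (S : V -> Prop) :=
  exists d : nat, (d%:Z = m + 1)%R /\ has_vdim d S.

Definition meet (S T : V -> Prop) : V -> Prop := fun x => S x /\ T x.

Definition same_space (S T : V -> Prop) := forall x, S x <-> T x.

Definition span3 (J1 J2 J3 : V -> Prop) : V -> Prop :=
  fun x => forall S, subspace S -> (forall y, J1 y \/ J2 y \/ J3 y -> S y) -> S x.

Definition adj_eq (k : int) (I J : V -> Prop) := is_pspace k (meet I J).

Definition adj_ge (k : int) (I J : V -> Prop) :=
  exists m : int, (k <= m)%R /\ is_pspace m (meet I J).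

Definition exactly_two (a b c : Prop) :=
  [\/ a /\ b /\ ~ c, a /\ ~ b /\ c | ~ a /\ b /\ c].

Definition round_up_triple (Gamma : (V -> Prop) -> (V -> Prop) -> Prop)
  (i j : nat) (J1 J2 J3 : V -> Prop) :=
  [/\ is_pspace j%:Z J1, is_pspace j%:Z J2, is_pspace j%:Z J3,
      [/\ ~ same_space J1 J2, ~ same_space J1 J3 & ~ same_space J2 J3] &
      (forall I, is_pspace i%:Z I -> ~ exactly_two (Gamma I J1) (Gamma I J2) (Gamma I J3))
    /\ exists I, [/\ is_pspace i%:Z I, Gamma I J1, Gamma I J2 & Gamma I J3]].

End PG.

(* Count vector dimensions: an i-space has dimension a = i + 1, a j-space b = j + 1, and
   adjacency compares the dimension of a meet with c = k + 1.  As no i-space is adjacent to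
   exactly two of J1, J2, J3, adjacency to two of them forces adjacency to the third.  Since
   a + b <= n + 1, a subspace P of dimension at most a extends to an a-space without changing
   the relevant meets (in type III the added vectors avoid three proper subspaces, which needs
   |L| > 2), so the same closure holds for P.  For P a c-subspace of Js ∩ Jt this gives
   Js ∩ Jt ⊆ Ju as soon as dim (Js ∩ Jt) >= c, and a descent on (dim (P ∩ J3), dim P) shows
   that the pairwise meets cannot all be smaller than c (an i-space adjacent to all three
   provides the room).  Hence D = J1 ∩ J2 ∩ J3 has dimension at least c.  In type III a
   c-subspace of D plus a vector of J3 outside J1 ∪ J2 violates the closure, so there are no
   round-up triples at all.  In type II the spaces Q + x1 + x2 with Q ⊆ D show J1, J2 ⊆ J3 + x1
   for x1 ∈ J1 \ J3: the triple is a pencil, with dim D = b - 1 and a span of dimension b + 1. *)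

From HB Require Import structures.
From mathcomp Require Import all_boot all_order all_algebra.
From mathcomp Require Import zify.
From Stdlib Require Import Classical ClassicalEpsilon.
Set Implicit Arguments. Unset Strict Implicit. Unset Printing Implicit Defensive.
Import Order.TTheory GRing.Theory Num.Theory.
Local Open Scope ring_scope.

Section SkewProjectiveSpace.
Variables (L : unitRingType) (HL : skew_field L) (N : nat).
Local Notation V := 'rV[L]_N.
Implicit Types (S T U P Q Z : V -> Prop) (s t : seq V).

(** * Linear algebra over a skew field *)

Lemma skew_scalerK (a : L) (v : V) : a != 0 -> a^-1 *: (a *: v) = v.
Proof. by move=> a0; rewrite scalerA mulVr ?scale1r // HL. Qed.

Definition incl S T := forall x, S x -> T x.

Definition sum_space S T : V -> Prop := fun y => exists u w, [/\ S u, T w & y = u + w].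

Definition adjoin S x : V -> Prop := fun y => exists a, S (y - a *: x).

Fixpoint seq_span s : V -> Prop :=
  if s is v :: s' then adjoin (seq_span s') v else fun x => x = 0.

Lemma subspace0 S : subspace S -> S 0. Proof. by case. Qed.
Lemma subspaceD S x y : subspace S -> S x -> S y -> S (x + y).
Proof. by case=> _ h _; apply: h. Qed.
Lemma subspaceZ S a x : subspace S -> S x -> S (a *: x).
Proof. by case=> _ _ h; apply: h. Qed.
Lemma subspaceN S x : subspace S -> S x -> S (- x).
Proof. by move=> hS h; rewrite -scaleN1r; apply: subspaceZ. Qed.
Lemma subspaceB S x y : subspace S -> S x -> S y -> S (x - y).
Proof. by move=> hS hx hy; apply: subspaceD => //; apply: subspaceN. Qed.

Lemma subspaceZK S a x : subspace S -> a != 0 -> S (a *: x) -> S x.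
Proof. by move=> hS a0 h; rewrite -(skew_scalerK x a0); apply: subspaceZ. Qed.

Lemma subspace_ext S T : same_space S T -> subspace T -> subspace S.
Proof.
move=> e [h0 hD hZ]; split; first by apply/e.
  by move=> x y /e hx /e hy; apply/e; apply: hD.
by move=> a x /e hx; apply/e; apply: hZ.
Qed.

Lemma subspaceT : subspace (fun _ : V => True). Proof. by []. Qed.

Lemma subspace_meet S T : subspace S -> subspace T -> subspace (meet S T).
Proof.
move=> hS hT; split; first by split; apply: subspace0.
  by move=> x y [? ?] [? ?]; split; apply: subspaceD.
by move=> a x [? ?]; split; apply: subspaceZ.
Qed.

Lemma subspace_sum S T : subspace S -> subspace T -> subspace (sum_space S T).
Proof.
move=> hS hT; split.
- by exists 0, 0; split; rewrite ?addr0 //; apply: subspace0.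
- move=> x y [u [w [hu hw ->]]] [u' [w' [hu' hw' ->]]].
  by exists (u + u'), (w + w'); split; [apply: subspaceD|apply: subspaceD|rewrite addrACA].
- move=> a x [u [w [hu hw ->]]].
  by exists (a *: u), (a *: w); split; [apply: subspaceZ|apply: subspaceZ|rewrite scalerDr].
Qed.

Lemma subspace_adjoin S x : subspace S -> subspace (adjoin S x).
Proof.
move=> hS; split.
- by exists 0; rewrite scale0r subr0; apply: subspace0.
- move=> y z [a ha] [b hb]; exists (a + b).
  by rewrite scalerDl opprD addrACA; apply: subspaceD.
- by move=> c y [a ha]; exists (c * a); rewrite -scalerA -scalerBr; apply: subspaceZ.
Qed.

Lemma subspace_seq_span s : subspace (seq_span s).
Proof.
elim: s => [|v s IH]; last exact: subspace_adjoin.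
split => //; first by move=> x y -> ->; rewrite addr0.
by move=> a x ->; rewrite scaler0.
Qed.

Lemma meet_inclL S T : incl (meet S T) S. Proof. by move=> x []. Qed.
Lemma meet_inclR S T : incl (meet S T) T. Proof. by move=> x []. Qed.

Lemma sum_l S T x : subspace T -> S x -> sum_space S T x.
Proof. by move=> hT Sx; exists x, 0; split; rewrite ?addr0 //; apply: subspace0. Qed.
Lemma sum_r S T x : subspace S -> T x -> sum_space S T x.
Proof. by move=> hS Tx; exists 0, x; split; rewrite ?add0r //; apply: subspace0. Qed.
Lemma sum_min S T U : subspace U -> incl S U -> incl T U -> incl (sum_space S T) U.
Proof. by move=> hU su tu x [u [w [hu hw ->]]]; apply: subspaceD => //; [apply: su|apply: tu]. Qed.

Lemma adjoin_l S x y : S y -> adjoin S x y.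
Proof. by move=> h; exists 0; rewrite scale0r subr0. Qed.
Lemma adjoin_x S x : subspace S -> adjoin S x x.
Proof. by move=> hS; exists 1; rewrite scale1r subrr; apply: subspace0. Qed.
Lemma adjoin_min S U x : subspace U -> incl S U -> U x -> incl (adjoin S x) U.
Proof.
move=> hU su ux y [a ha]; rewrite -(subrK (a *: x) y).
by apply: subspaceD => //; [apply: su | apply: subspaceZ].
Qed.
Lemma adjoin_ext S T x : same_space S T -> same_space (adjoin S x) (adjoin T x).
Proof. by move=> e y; split; case=> a h; exists a; apply/e. Qed.

Lemma adjoin_meet Q Z w y : subspace Q -> subspace Z -> ~ sum_space Q Z w ->
  adjoin Q w y -> Z y -> Q y.
Proof.
move=> hQ hZ nw [a ha] Zy.
have [a0|a0] := eqVneq a 0; first by move: ha; rewrite a0 scale0r subr0.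
exfalso; apply: nw; exists (- (a^-1 *: (y - a *: w))), (a^-1 *: y); split.
- by apply: subspaceN => //; apply: subspaceZ.
- by apply: subspaceZ.
- by rewrite scalerBr skew_scalerK // opprB subrK.
Qed.

Lemma seq_span_min S s x : subspace S -> {in s, forall v, S v} -> seq_span s x -> S x.
Proof.
move=> hS; elim: s x => [|v s IH] x /= hs; first by move->; apply: subspace0.
apply: adjoin_min x => //; last by apply: hs; rewrite inE eqxx.
by move=> y; apply: IH => w hw; apply: hs; rewrite inE hw orbT.
Qed.

Lemma mem_seq_span s v : v \in s -> seq_span s v.
Proof.
elim: s => [|w s IH] //=; rewrite inE => /orP[/eqP->|/IH]; last exact: adjoin_l.
by apply: adjoin_x; apply: subspace_seq_span.
Qed.

Lemma seq_span_sub s t x : {in s, forall v, seq_span t v} -> seq_span s x -> seq_span t x.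
Proof. by apply: seq_span_min; apply: subspace_seq_span. Qed.

Lemma seq_span_subseq s t x : {subset s <= t} -> seq_span s x -> seq_span t x.
Proof. by move=> st; apply: seq_span_sub => v /st; apply: mem_seq_span. Qed.

Lemma seq_span_cat s t x :
  seq_span (s ++ t) x <-> exists y z, [/\ seq_span s y, seq_span t z & x = y + z].
Proof.
elim: s x => [|v s IH] x /=.
  split; first by move=> h; exists 0, x; rewrite add0r.
  by case=> y [z [-> h ->]]; rewrite add0r.
split.
  case=> a /IH [y [z [hy hz e]]]; exists (y + a *: v), z; split => //.
    by exists a; rewrite addrK.
  by rewrite addrAC -e subrK.
case=> y [z [[a ha] hz ->]]; exists a; apply/IH; exists (y - a *: v), z; split => //.
by rewrite addrAC.
Qed.

Definition seq_free s := uniq s /\ forall x, x \in s -> ~ seq_span (filter (predC1 x) s) x.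

Lemma seq_free_cons v s : seq_free (v :: s) <-> ~ seq_span s v /\ seq_free s.
Proof.
split.
  case=> /= /andP[vs us] h; split.
    move: (h v (mem_head _ _)); rewrite /= eqxx /= => h1 h2; apply: h1.
    by apply: seq_span_subseq h2 => y ys; rewrite mem_filter /= ys andbT;
      apply: contraNneq vs => <-.
  split => // x xs hx; apply: (h x); first by rewrite inE xs orbT.
  rewrite /=; case: eqP => [ex|_]; first by move: vs; rewrite ex xs.
  exact: adjoin_l.
case=> nv [us h].
have vs : v \notin s by apply/negP => vs; apply: nv; exact: mem_seq_span.
split; first by rewrite /= us vs.
move=> x; rewrite inE => /orP[/eqP->|xs] /=.
  rewrite eqxx /= => h1; apply: nv; apply: seq_span_subseq h1 => y.
  by rewrite mem_filter => /andP[].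
case: eqP => [ev|nev] /=; first by move=> _; apply: nv; rewrite ev; exact: mem_seq_span.
case=> a ha.
have [a0|a0] := eqVneq a 0; first by move: ha; rewrite a0 scale0r subr0; apply: h.
apply: nv; apply: (@seq_span_sub (x :: filter (predC1 x) s)).
  move=> y; rewrite inE => /orP[/eqP->|]; first exact: mem_seq_span.
  by rewrite mem_filter => /andP[_ ys]; apply: mem_seq_span.
exists a^-1; rewrite -[v](skew_scalerK v a0) -scalerBr -opprB scalerN.
by apply: subspaceN (subspaceZ _ (subspace_seq_span _) ha); apply: subspace_seq_span.
Qed.

Lemma seq_free_perm s t : perm_eq s t -> seq_free s -> seq_free t.
Proof.
move=> p [us h]; split; first by rewrite -(perm_uniq p).
move=> x; rewrite -(perm_mem p) => xs hx; apply: (h x xs).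
by apply: seq_span_subseq hx => y; rewrite !mem_filter (perm_mem p).
Qed.

Lemma seq_free_cat s t : seq_free (s ++ t) <->
  [/\ seq_free s, seq_free t & forall x, seq_span s x -> seq_span t x -> x = 0].
Proof.
have hsp := subspace_seq_span.
elim: s => [|v s IH] /=.
  by split; [move=> h; split => // x -> | case].
split.
  move/seq_free_cons=> [nv /IH [hs ht hst]]; split => //.
    apply/seq_free_cons; split => // h; apply: nv; apply/seq_span_cat.
    by exists v, 0; split; [|apply: subspace0|rewrite addr0].
  move=> x [a ha] hx.
  have [a0|a0] := eqVneq a 0; first by move: ha; rewrite a0 scale0r subr0 => ha; apply: hst.
  exfalso; apply: nv; apply/seq_span_cat.
  exists (- (a^-1 *: (x - a *: v))), (a^-1 *: x); split.
  - by apply: subspaceN => //; apply: subspaceZ.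
  - by apply: subspaceZ.
  - by rewrite scalerBr skew_scalerK // opprB subrK.
case=> /seq_free_cons [nv hs] ht hst; apply/seq_free_cons; split; last first.
  by apply/IH; split => // x hx hx'; apply: hst => //; apply: adjoin_l.
case/seq_span_cat=> y [z [hy hz e]].
have z0 : z = 0.
  apply: hst => //; exists 1; rewrite scale1r.
  have -> : z - v = - y by rewrite e opprD addrCA subrr addr0.
  exact: subspaceN.
by apply: nv; rewrite e z0 addr0.
Qed.

Lemma exchange u t v : ~ seq_span u v -> seq_span (t ++ u) v ->
  exists t1 w t2, t = t1 ++ w :: t2 /\ seq_span (v :: t1 ++ t2 ++ u) w.
Proof.
move=> nu; elim: t => [|w t IH] /=; first by move=> h; exfalso; apply: nu.
case=> a ha.
have [a0|a0] := eqVneq a 0.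
  move: ha; rewrite a0 scale0r subr0 => /IH [t1 [w' [t2 [-> h]]]].
  exists (w :: t1), w', t2; split => //.
  change (seq_span (v :: (w :: t1) ++ t2 ++ u) w').
  apply: seq_span_subseq h => y; rewrite /= !(inE, mem_cat).
  by case/orP=> [->//|/orP[->|/orP[->|->]]]; rewrite ?orbT.
exists [::], w, t; split => //=; exists a^-1.
rewrite -[w](skew_scalerK w a0) -scalerBr -opprB scalerN.
by apply: subspaceN (subspaceZ _ (subspace_seq_span _) ha); apply: subspace_seq_span.
Qed.

(* Steinitz exchange, with [u] the part of the free family already inside the spanning one. *)
Lemma steinitz_cat s : forall u t, seq_free (s ++ u) ->
  {in s, forall x, seq_span (u ++ t) x} -> (size s <= size t)%N.
Proof.
elim: s => [|v s IH] u t //= hvi hs; have /seq_free_cons [nv hi] := hvi.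
have nu : ~ seq_span u v.
  by move=> h; apply: nv; apply: seq_span_subseq h => y hy; rewrite mem_cat hy orbT.
have hv : seq_span (t ++ u) v.
  by apply: seq_span_subseq (hs v (mem_head _ _)) => y; rewrite !mem_cat orbC.
have [t1 [w [t2 [et hw]]]] := exchange nu hv; subst t.
rewrite size_cat /= addnS ltnS -size_cat.
apply: (IH (v :: u)).
  by apply: seq_free_perm hvi; move: (perm_catCA [:: v] s u) => /= ->.
move=> x xs; have xs' : x \in v :: s by rewrite inE xs orbT.
apply: seq_span_sub (hs x xs') => y hy; have [->|nyw] := eqVneq y w.
  apply: seq_span_subseq hw => z; rewrite !(mem_cat, inE).
  by case/orP=> [->//|/orP[->|/orP[->|->]]]; rewrite ?orbT.
apply: mem_seq_span; move: hy; rewrite !(mem_cat, inE) (negbTE nyw) /=.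
by case/orP=> [->|/orP[]->]; rewrite ?orbT.
Qed.

Lemma steinitz s t : seq_free s -> {in s, forall x, seq_span t x} -> (size s <= size t)%N.
Proof. by move=> hi hs; apply: (@steinitz_cat s [::] t); rewrite ?cats0. Qed.

Definition fam_seq d (v : 'I_d -> V) : seq V := [seq v i | i <- enum 'I_d].

Lemma fam_seqS d (v : 'I_d.+1 -> V) : fam_seq v = v ord0 :: fam_seq (fun i => v (lift ord0 i)).
Proof. by rewrite /fam_seq enum_ordSl /= -map_comp. Qed.

Lemma size_fam_seq d (v : 'I_d -> V) : size (fam_seq v) = d.
Proof. by rewrite size_map size_enum_ord. Qed.

Lemma in_spanS d (v : 'I_d.+1 -> V) x :
  in_span v x <-> adjoin (in_span (fun i => v (lift ord0 i))) (v ord0) x.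
Proof.
split.
  case=> c ->; exists (c ord0); exists (fun i => c (lift ord0 i)).
  by rewrite big_ord_recl addrAC subrr add0r.
case=> a [c e]; exists (fun i => if unlift ord0 i is Some j then c j else a).
rewrite big_ord_recl unlift_none.
under eq_bigr => i _ do rewrite liftK.
by rewrite -e addrC subrK.
Qed.

Lemma in_span_seq d (v : 'I_d -> V) : same_space (in_span v) (seq_span (fam_seq v)).
Proof.
elim: d v => [|d IH] v x.
  rewrite /fam_seq enum_ord0 /=; split; first by case=> c ->; rewrite big_ord0.
  by move->; exists (fun _ => 0); rewrite big_ord0.
by rewrite in_spanS fam_seqS; apply: adjoin_ext.
Qed.

Lemma lin_indepS d (v : 'I_d.+1 -> V) : lin_indep v <->
  ~ in_span (fun i => v (lift ord0 i)) (v ord0) /\ lin_indep (fun i => v (lift ord0 i)).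
Proof.
split.
  move=> h; split.
    case=> c e.
    have := h (fun i => if unlift ord0 i is Some j then - c j else 1).
    rewrite big_ord_recl unlift_none scale1r.
    under eq_bigr => i _ do rewrite liftK scaleNr.
    rewrite sumrN -e subrr => /(_ erefl ord0); rewrite unlift_none => /eqP.
    by rewrite oner_eq0.
  move=> c e j.
  have := h (fun i => if unlift ord0 i is Some j then c j else 0).
  rewrite big_ord_recl unlift_none scale0r add0r.
  under eq_bigr => i _ do rewrite liftK.
  by move=> /(_ e (lift ord0 j)); rewrite liftK.
case=> nin hi c e.
have [c0|c0] := eqVneq (c ord0) 0; last first.
  exfalso; apply: nin; exists (fun j => - ((c ord0)^-1 * c (lift ord0 j))).
  move: e; rewrite big_ord_recl => /eqP; rewrite addr_eq0 => /eqP e.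
  rewrite -[v ord0](skew_scalerK _ c0) e scalerN scaler_sumr -sumrN.
  by apply: eq_bigr => i _; rewrite scalerA scaleNr.
move: e; rewrite big_ord_recl c0 scale0r add0r => /hi h t.
by case: (unliftP ord0 t) => [j ->|->] //; apply: h.
Qed.

Lemma lin_indep_seq d (v : 'I_d -> V) : lin_indep v <-> seq_free (fam_seq v).
Proof.
elim: d v => [|d IH] v.
  by rewrite /fam_seq enum_ord0; split => // _ c _ [].
rewrite lin_indepS fam_seqS seq_free_cons -IH.
by split; case=> h1 h2; split => // h; apply: h1; apply/in_span_seq.
Qed.

Definition std_basis : seq V := fam_seq (fun j => delta_mx 0 j).

Lemma seq_span_std_basis x : seq_span std_basis x.
Proof.
by apply/in_span_seq; exists (x 0); rewrite [LHS]matrix_sum_delta big_ord1.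
Qed.

Lemma seq_free_std_basis : seq_free std_basis.
Proof.
apply/lin_indep_seq => c e t0.
have := congr1 (fun A : V => A 0 t0) e; rewrite /= summxE mxE => <-.
rewrite (bigD1 t0) //= big1 ?addr0; first by rewrite !mxE !eqxx /= mulr1.
by move=> i ni; rewrite !mxE eqxx /= eq_sym (negbTE ni) mulr0.
Qed.

Lemma size_seq_free s : seq_free s -> (size s <= N)%N.
Proof.
move=> hs; have := steinitz hs (fun x _ => seq_span_std_basis x).
by rewrite size_fam_seq.
Qed.

Lemma not_incl_ex S T : ~ incl S T -> exists x, S x /\ ~ T x.
Proof.
by move=> ns; apply: NNPP => h; apply: ns => x Sx; apply: NNPP => nx; apply: h; exists x.
Qed.

Definition is_basis S s := seq_free s /\ same_space S (seq_span s).

Lemma extend_basis S s : subspace S -> seq_free s -> {in s, forall x, S x} ->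
  exists r, is_basis S (r ++ s).
Proof.
move=> hS; move: {2}(N - size s)%N (leqnn (N - size s)) => k.
elim: k s => [|k IH] s hk hs sS;
  case: (classic (incl S (seq_span s))) => [Ss|/not_incl_ex [x [Sx nx]]];
  try by exists [::]; split => // x; split; [apply: Ss | apply: seq_span_min].
all: have /= hsz := size_seq_free (proj2 (seq_free_cons x s) (conj nx hs)).
  by move: hk hsz; clear; lia.
have [|||r hr] := IH (x :: s); first by rewrite /=; move: hk hsz; clear; lia.
- exact/seq_free_cons.
- by move=> y; rewrite inE => /orP[/eqP->|/sS].
by exists (rcons r x); rewrite cat_rcons.
Qed.

Lemma exists_basis S : subspace S -> exists s, is_basis S s.
Proof. by move=> hS; have [||r] := @extend_basis S [::] hS => //; exists (r ++ [::]). Qed.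

Lemma is_basis_subspace S s : is_basis S s -> subspace S.
Proof. by case=> _ e; apply: subspace_ext e (subspace_seq_span s). Qed.

Lemma basis_size S s t : is_basis S s -> is_basis S t -> size s = size t.
Proof.
move=> [hs es] [ht et]; apply/eqP; rewrite eqn_leq.
by rewrite (steinitz hs) ?(steinitz ht) // => x /mem_seq_span; [move/et/es | move/es/et].
Qed.

(* Junk value when [S] has no basis, i.e. is not a subspace. *)
Definition vdim S : nat := epsilon (inhabits 0%N) (fun d => exists s, is_basis S s /\ size s = d).

Lemma vdim_basis S s : is_basis S s -> vdim S = size s.
Proof.
move=> hs; have [t [ht <-]] : exists t, is_basis S t /\ size t = vdim S.
  by apply: (epsilon_spec (inhabits 0%N) (fun d => exists s, is_basis S s /\ size s = d));
    exists (size s), s.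
exact: basis_size ht hs.
Qed.

Lemma vdim_seq_span s : seq_free s -> vdim (seq_span s) = size s.
Proof. by move=> hs; apply: vdim_basis. Qed.

Lemma vdim_ext S T : subspace S -> same_space S T -> vdim S = vdim T.
Proof.
move=> hS e; have [s [hs es]] := exists_basis hS.
by rewrite (vdim_basis (conj hs es)) (@vdim_basis T s) // ; split => // x; rewrite -e.
Qed.

Lemma vdim_le S T : subspace S -> subspace T -> incl S T -> (vdim S <= vdim T)%N.
Proof.
move=> hS hT st; have [s hs] := exists_basis hS; have [t ht] := exists_basis hT.
rewrite (vdim_basis hs) (vdim_basis ht); apply: steinitz; first by case: hs.
by move=> x /mem_seq_span /(hs.2 x) /st /(ht.2 x).
Qed.

Lemma incl_of_vdim S T : subspace S -> subspace T -> incl S T ->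
  (vdim T <= vdim S)%N -> incl T S.
Proof.
move=> hS hT st le; have [s [hs es]] := exists_basis hS.
have [r [hr er]] := extend_basis hT hs (fun x hx => st x ((es x).2 (mem_seq_span hx))).
move: le; rewrite (vdim_basis (conj hr er)) (vdim_basis (conj hs es)) size_cat.
case: r {hr} er => [|? ?] er; last by rewrite /=; clear; lia.
by move=> _ x /er /es.
Qed.

Lemma vdim_lt S T x : subspace S -> subspace T -> incl S T -> T x -> ~ S x ->
  (vdim S < vdim T)%N.
Proof.
move=> hS hT st Tx nSx; rewrite ltnNge; apply/negP => le.
exact: nSx (incl_of_vdim hS hT st le Tx).
Qed.

Lemma vdim_meetC S T : subspace S -> subspace T -> vdim (meet S T) = vdim (meet T S).
Proof. by move=> hS hT; apply: vdim_ext; [exact: subspace_meet | move=> x; split; case]. Qed.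

Lemma vdim_meet_idl S T : subspace S -> subspace T -> incl S T -> vdim (meet S T) = vdim S.
Proof.
move=> hS hT st; apply: vdim_ext; first exact: subspace_meet.
by move=> x; split; [case | split => //; apply: st].
Qed.

Lemma vdim_adjoin S x : subspace S -> ~ S x -> vdim (adjoin S x) = (vdim S).+1.
Proof.
move=> hS nx; have [s [hs es]] := exists_basis hS.
rewrite (vdim_basis (conj hs es)) (@vdim_basis _ (x :: s)) //; split.
  by apply/seq_free_cons; split => // /es.
exact: adjoin_ext.
Qed.

Lemma vdim_full : vdim (fun _ : V => True) = N.
Proof.
rewrite (@vdim_basis _ std_basis) ?size_fam_seq //.
by split; [exact: seq_free_std_basis | move=> x; split => // _; apply: seq_span_std_basis].
Qed.

Lemma vdim_leN S : subspace S -> (vdim S <= N)%N.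
Proof. by move=> hS; rewrite -vdim_full; apply: vdim_le. Qed.

Lemma exists_notin S : subspace S -> (vdim S < N)%N -> exists w, ~ S w.
Proof.
move=> hS lt; apply: NNPP => h; move: lt; rewrite -vdim_full ltnNge => /negP; apply.
by apply: vdim_le => // x _; apply: NNPP => nx; apply: h; exists x.
Qed.

Lemma vdim_grassmann S T : subspace S -> subspace T ->
  (vdim (sum_space S T) + vdim (meet S T) = vdim S + vdim T)%N.
Proof.
move=> hS hT; have [s0 [h0 e0]] := exists_basis (subspace_meet hS hT).
have [r1 [h1 e1]] := extend_basis hS h0 (fun x hx => ((e0 x).2 (mem_seq_span hx)).1).
have [r2 [h2 e2]] := extend_basis hT h0 (fun x hx => ((e0 x).2 (mem_seq_span hx)).2).
have /seq_free_cat [hr1 _ d1] := h1.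
have hi : seq_free (r1 ++ r2 ++ s0).
  apply/seq_free_cat; split => // x xr1 xr2s; apply: d1 => //; apply/e0; split.
    by apply/e1; apply: seq_span_subseq xr1 => y; rewrite mem_cat => ->.
  exact/e2.
have hU : is_basis (sum_space S T) (r1 ++ r2 ++ s0).
  split => // x; split.
    case=> u [w [/e1 hu /e2 hw ->]]; apply: subspaceD (subspace_seq_span _) _ _.
      by apply: seq_span_subseq hu => y; rewrite !mem_cat => /orP[->|->]; rewrite ?orbT.
    by apply: seq_span_subseq hw => y; rewrite !mem_cat => /orP[->|->]; rewrite ?orbT.
  case/seq_span_cat=> y [z [hy /seq_span_cat [z1 [z2 [hz1 hz2 ->]]] ->]].
  exists (y + z2), z1; split; last by rewrite addrAC addrA.
    by apply/e1; apply/seq_span_cat; exists y, z2.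
  by apply/e2; apply: seq_span_subseq hz1 => w; rewrite mem_cat => ->.
rewrite (vdim_basis hU) (vdim_basis (conj h0 e0)) (vdim_basis (conj h1 e1)).
by rewrite (vdim_basis (conj h2 e2)) !size_cat; clear; lia.
Qed.

Lemma vdim_sum_le S T : subspace S -> subspace T ->
  (vdim (sum_space S T) <= vdim S + vdim T)%N.
Proof. by move=> hS hT; have := vdim_grassmann hS hT; clear; lia. Qed.

Lemma exists_vdim_between A T d : subspace A -> subspace T -> incl A T ->
  (vdim A <= d <= vdim T)%N ->
  exists B, [/\ subspace B, incl A B, incl B T & vdim B = d].
Proof.
move=> hA hT sAT /andP[l1 l2]; have [s [hs es]] := exists_basis hA.
have [r [hr er]] := extend_basis hT hs (fun x hx => sAT x ((es x).2 (mem_seq_span hx))).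
move: l1 l2; rewrite (vdim_basis (conj hs es)) (vdim_basis (conj hr er)) => l1 l2.
set r2 := drop (size r - (d - size s)) r.
have hi : seq_free (r2 ++ s).
  move: hr; rewrite -{1}(cat_take_drop (size r - (d - size s)) r) -catA.
  by case/seq_free_cat.
exists (seq_span (r2 ++ s)); split.
- exact: subspace_seq_span.
- by move=> x /es; apply: seq_span_subseq => y; rewrite mem_cat => ->; rewrite orbT.
- move=> x hx; apply/er; apply: seq_span_subseq hx => y.
  by rewrite !mem_cat => /orP[/mem_drop ->|->]; rewrite ?orbT.
- by rewrite vdim_seq_span // size_cat size_drop; move: l1 l2; rewrite size_cat; clear; lia.
Qed.

Lemma exists_hyperplane A P z : subspace A -> subspace P -> incl A P -> P z -> ~ A z ->
  exists H, [/\ subspace H, incl A H, incl H P, ~ H z & (vdim H).+1 = vdim P].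
Proof.
move=> hA hP sAP Pz nz; have [s [hs es]] := exists_basis hA.
have hzs : seq_free (z :: s) by apply/seq_free_cons; split => // /es.
have [r [hr er]] : exists r, is_basis P (r ++ z :: s).
  by apply: extend_basis => // x; rewrite inE => /orP[/eqP->//|/mem_seq_span/es/sAP].
have /seq_free_cons [nz' hi] : seq_free (z :: r ++ s).
  by apply: seq_free_perm hr; move: (perm_catCA r [:: z] s) => /= ->.
exists (seq_span (r ++ s)); split => //.
- exact: subspace_seq_span.
- by move=> x /es; apply: seq_span_subseq => y; rewrite mem_cat => ->; rewrite orbT.
- move=> x hx; apply/er; apply: seq_span_subseq hx => y; rewrite !mem_cat inE.
  by case/orP=> ->; rewrite ?orbT.
- by rewrite vdim_seq_span // (vdim_basis (conj hr er)) !size_cat /= addnS.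
Qed.

Lemma exists_vdim_sub T d : subspace T -> (d <= vdim T)%N ->
  exists B, [/\ subspace B, incl B T & vdim B = d].
Proof.
move=> hT le; have s0T : incl (seq_span [::]) T by move=> x ->; apply: subspace0.
have [|B [hB _ sBT dB]] := exists_vdim_between (subspace_seq_span [::]) hT s0T (d := d).
  by rewrite vdim_seq_span //= le.
by exists B.
Qed.

Lemma vdim_meet_adjoin Q J x : subspace Q -> subspace J -> incl Q J -> ~ J x ->
  vdim (meet (adjoin Q x) J) = vdim Q.
Proof.
move=> hQ hJ sQJ nx; apply: vdim_ext; first exact: subspace_meet (subspace_adjoin x hQ) hJ.
move=> y; split; last by move=> Qy; split; [apply: adjoin_l | apply: sQJ].
case=> Py Jy; apply: adjoin_meet Py Jy => // h; apply: nx.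
exact: sum_min hJ sQJ (fun z h => h) x h.
Qed.

Lemma vdim_meet_hyperplane H P J : subspace H -> subspace P -> subspace J -> incl H P ->
  (vdim H).+1 = vdim P -> (vdim (meet P J) <= (vdim (meet H J)).+1)%N.
Proof.
move=> hH hP hJ sHP dH; have hX := subspace_meet hP hJ.
have := vdim_grassmann hH hX.
have -> : vdim (meet H (meet P J)) = vdim (meet H J).
  apply: vdim_ext; first exact: subspace_meet.
  by move=> x; split; [case=> ? [] | case=> ? ?; split => //; split => //; apply: sHP].
have : (vdim (sum_space H (meet P J)) <= vdim P)%N.
  by apply: vdim_le => //; [exact: subspace_sum | apply: sum_min => // x []].
by rewrite -dH; clear; lia.
Qed.

Lemma avoid_two T A B : subspace T -> subspace A -> subspace B ->
  (exists x, T x /\ ~ A x) -> (exists y, T y /\ ~ B y) ->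
  exists w, [/\ T w, ~ A w & ~ B w].
Proof.
move=> hT hA hB [x [Tx nAx]] [y [Ty nBy]].
case: (classic (B x)) => Bx; last by exists x.
case: (classic (A y)) => Ay; last by exists y.
exists (x + y); split; first exact: subspaceD.
  by move=> h; apply: nAx; have := subspaceB hA h Ay; rewrite addrK.
by move=> h; apply: nBy; have := subspaceB hB h Bx; rewrite addrAC subrr add0r.
Qed.

Lemma line_meet_once X (y z : V) (a b : L) : subspace X -> ~ X y ->
  X (z + a *: y) -> X (z + b *: y) -> a = b.
Proof.
move=> hX ny h1 h2; apply/eqP; apply: contraT => ab; exfalso; apply: ny.
apply: (@subspaceZK X (a - b)) => //; first by rewrite subr_eq0.
by have := subspaceB hX h1 h2; rewrite scalerBl opprD addrACA subrr add0r.
Qed.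

(* Take [y] avoiding [B] and [C]; if [y] lies in [A], the points [z], [z + y], [z + t y]
   all avoid [A], and each of [B], [C] contains at most one of them. *)
Lemma avoid_three (t : L) T A B C : t != 0 -> t != 1 ->
  subspace T -> subspace A -> subspace B -> subspace C ->
  (exists x, T x /\ ~ A x) -> (exists y, T y /\ ~ B y) -> (exists z, T z /\ ~ C z) ->
  exists w, [/\ T w, ~ A w, ~ B w & ~ C w].
Proof.
move=> t0 t1 hT hA hB hC [z [Tz nAz]] hyB hzC.
have [y [Ty nBy nCy]] := avoid_two hT hB hC hyB hzC.
case: (classic (A y)) => Ay; last by exists y.
pose p (a : L) := z + a *: y.
have pick (a : L) : ~ B (p a) -> ~ C (p a) -> exists w, [/\ T w, ~ A w, ~ B w & ~ C w].
  move=> nB nC; exists (p a); split => //; first by apply: subspaceD => //; apply: subspaceZ.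
  by move=> h; apply: nAz; have := subspaceB hA h (subspaceZ a hA Ay); rewrite addrK.
have onceB (a b : L) : B (p a) -> a != b -> ~ B (p b).
  by move=> h ab h'; case/eqP: ab; apply: line_meet_once h h'.
have onceC (a b : L) : C (p a) -> a != b -> ~ C (p b).
  by move=> h ab h'; case/eqP: ab; apply: line_meet_once h h'.
have n01 : (0 : L) != 1 by rewrite eq_sym oner_neq0.
have n0t : (0 : L) != t by rewrite eq_sym.
have n1t : (1 : L) != t by rewrite eq_sym.
case: (classic (B (p 0))) => B0.
  case: (classic (C (p 1))) => C1; last exact: pick (onceB _ _ B0 n01) C1.
  exact: pick (onceB _ _ B0 n0t) (onceC _ _ C1 n1t).
case: (classic (C (p 0))) => C0; last exact: pick B0 C0.
case: (classic (B (p 1))) => B1; last exact: pick B1 (onceC _ _ C0 n01).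
exact: pick (onceB _ _ B1 n1t) (onceC _ _ C0 n0t).
Qed.

(** * Closure properties of round-up triples *)

(* Dimensions are vector dimensions, and [adj] is the adjacency condition on the dimension of
   a meet: [c <= _] in type II, [_ = c] in type III. *)
Definition adj_closed (adj : nat -> Prop) (a : nat) (Ja Jb Jc : V -> Prop) :=
  forall I, subspace I -> vdim I = a ->
    adj (vdim (meet I Ja)) -> adj (vdim (meet I Jb)) -> adj (vdim (meet I Jc)).

Definition adj_closed_le (adj : nat -> Prop) (a : nat) (Ja Jb Jc : V -> Prop) :=
  forall P, subspace P -> (vdim P <= a)%N ->
    adj (vdim (meet P Ja)) -> adj (vdim (meet P Jb)) -> adj (vdim (meet P Jc)).

Lemma extend_avoiding (F : (V -> Prop) -> Prop) a P :
  subspace P -> (forall Z, F Z -> subspace Z) -> (exists Z, F Z) -> (vdim P <= a)%N ->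
  (forall Q, subspace Q -> (vdim Q < a)%N -> exists w, forall Z, F Z -> ~ sum_space Q Z w) ->
  exists I, [/\ subspace I, vdim I = a, incl P I & forall Z, F Z -> incl (meet I Z) P].
Proof.
move=> hP hF [Z0 FZ0] le avoid.
suff ext k Q : subspace Q -> incl P Q -> (forall Z, F Z -> incl (meet Q Z) P) ->
    (vdim Q + k = a)%N ->
    exists I, [/\ subspace I, vdim I = a, incl P I & forall Z, F Z -> incl (meet I Z) P].
  by apply: (ext (a - vdim P)%N P) => //; [move=> Z _ x [] | move: le; clear; lia].
elim: k Q => [|k IH] Q hQ sPQ hQZ e; first by exists Q; rewrite -e addn0.
have [w nw] := avoid Q hQ (ltac:(move: e; clear; lia)).
have nQw : ~ Q w by move=> Qw; apply: (nw Z0 FZ0); apply: sum_l => //; apply: hF.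
apply: (IH (adjoin Q w)).
- exact: subspace_adjoin.
- by move=> x /sPQ; apply: adjoin_l.
- move=> Z FZ x [Qx Zx]; apply: (hQZ Z FZ); split => //.
  exact: adjoin_meet hQ (hF Z FZ) (nw Z FZ) Qx Zx.
- by rewrite vdim_adjoin // addSnnS.
Qed.

Lemma ge_closed_le a b c Ja Jb Jc : subspace Ja -> subspace Jb -> subspace Jc ->
  (vdim Jc <= b)%N -> (a + b <= N)%N ->
  adj_closed (fun d => c <= d)%N a Ja Jb Jc -> adj_closed_le (fun d => c <= d)%N a Ja Jb Jc.
Proof.
move=> ha hb hc dc ab cl P hP dP la lb.
have hF Z : Z = Jc -> subspace Z by move->.
have avoid Q : subspace Q -> (vdim Q < a)%N ->
    exists w, forall Z, Z = Jc -> ~ sum_space Q Z w.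
  move=> hQ dQ; have hQc := subspace_sum hQ hc.
  have [|w nw] := exists_notin hQc; last by exists w => Z ->.
  by have := vdim_sum_le hQ hc; move: dc ab dQ; clear; lia.
have [I [hI dI sPI hIc]] := extend_avoiding hP hF (ex_intro _ Jc erefl) dP avoid.
have mono J : subspace J -> (vdim (meet P J) <= vdim (meet I J))%N.
  by move=> hJ; apply: vdim_le; try exact: subspace_meet; move=> x [/sPI].
apply: leq_trans (cl I hI dI (leq_trans la (mono _ ha)) (leq_trans lb (mono _ hb))) _.
apply: vdim_le; try exact: subspace_meet.
by move=> x [Ix cx]; split => //; apply: (hIc Jc).
Qed.

Lemma eq_closed_le (t : L) a b c Ja Jb Jc : t != 0 -> t != 1 ->
  subspace Ja -> subspace Jb -> subspace Jc ->
  (vdim Ja <= b)%N -> (vdim Jb <= b)%N -> (vdim Jc <= b)%N -> (a + b <= N)%N ->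
  adj_closed (fun d => d = c) a Ja Jb Jc -> adj_closed_le (fun d => d = c) a Ja Jb Jc.
Proof.
move=> t0 t1 ha hb hc da db dc ab cl P hP dP la lb.
pose F Z := [\/ Z = Ja, Z = Jb | Z = Jc].
have hF Z : F Z -> subspace Z by case=> ->.
have avoid Q : subspace Q -> (vdim Q < a)%N ->
    exists w, forall Z, F Z -> ~ sum_space Q Z w.
  move=> hQ dQ.
  have proper Z : subspace Z -> (vdim Z <= b)%N -> exists x, True /\ ~ sum_space Q Z x.
    move=> hZ dZ; have [|w nw] := exists_notin (subspace_sum hQ hZ); last by exists w.
    by have := vdim_sum_le hQ hZ; move: dZ ab dQ; clear; lia.
  have [w [_ nwa nwb nwc]] := avoid_three t0 t1 subspaceT (subspace_sum hQ ha)
    (subspace_sum hQ hb) (subspace_sum hQ hc) (proper _ ha da) (proper _ hb db) (proper _ hc dc).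
  by exists w => Z [] ->.
have FJa : F Ja by constructor.
have [I [hI dI sPI hIZ]] := extend_avoiding hP hF (ex_intro _ Ja FJa) dP avoid.
have same Z : F Z -> vdim (meet I Z) = vdim (meet P Z).
  move=> FZ; apply: vdim_ext; first exact: subspace_meet (hF Z FZ).
  by move=> x; split; case=> Ix Zx; split => //; [apply: (hIZ Z) | apply: sPI].
have FJb : F Jb by constructor.
have FJc : F Jc by constructor.
by rewrite -(same _ FJc); apply: cl; rewrite ?(same _ FJa) ?(same _ FJb).
Qed.

Lemma meet2_incl (adj : nat -> Prop) a c Ja Jb Jc :
  subspace Ja -> subspace Jb -> subspace Jc -> adj c -> (forall d, (d < c)%N -> ~ adj d) ->
  adj_closed_le adj a Ja Jb Jc -> (0 < c <= a)%N -> (c <= vdim (meet Ja Jb))%N ->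
  incl (meet Ja Jb) Jc.
Proof.
move=> ha hb hc adjc adjlt cl /andP[c0 ca] cm; apply: NNPP => /not_incl_ex [v [Mv nv]].
have hM := subspace_meet ha hb.
have hv : seq_free [:: v].
  by apply/seq_free_cons; split=> // v0; apply: nv; rewrite v0; apply: subspace0.
have sVM : incl (seq_span [:: v]) (meet Ja Jb).
  by move=> x; apply: seq_span_min => // w; rewrite inE => /eqP->.
have [Q [hQ sVQ sQM dQ]] := @exists_vdim_between (seq_span [:: v]) _ c
  (subspace_seq_span _) hM sVM (ltac:(by rewrite vdim_seq_span //= c0 cm)).
have dQJ J : subspace J -> incl Q J -> adj (vdim (meet Q J)).
  by move=> hJ sQJ; rewrite vdim_meet_idl // dQ.
apply: (adjlt (vdim (meet Q Jc))); last first.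
  by apply: cl => //; [rewrite dQ | apply: dQJ => // x /sQM [] | apply: dQJ => // x /sQM []].
rewrite -dQ; apply: (@vdim_lt _ _ v); first exact: subspace_meet.
- exact: hQ.
- by move=> x [].
- by apply: sVQ; apply: mem_seq_span; rewrite inE.
- by case.
Qed.

Lemma adjacent_pair_bound c I J1 J2 : subspace I -> subspace J1 -> subspace J2 ->
  (c <= vdim (meet I J1))%N -> (c <= vdim (meet I J2))%N ->
  (2 * c <= vdim I + vdim (meet J1 J2))%N.
Proof.
move=> hI h1 h2 l1 l2.
have hX1 := subspace_meet hI h1; have hX2 := subspace_meet hI h2.
have := vdim_grassmann hX1 hX2.
have : (vdim (sum_space (meet I J1) (meet I J2)) <= vdim I)%N.
  by apply: vdim_le => //; [exact: subspace_sum | apply: sum_min => // x []].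
have : (vdim (meet (meet I J1) (meet I J2)) <= vdim (meet J1 J2))%N.
  by apply: vdim_le; try exact: subspace_meet; move=> x [[_ ?] [_ ?]].
by move: l1 l2; clear; lia.
Qed.

(** * The meets of the triple *)

Section Separation.
Variables (a c : nat) (J1 J2 J3 : V -> Prop).
Hypotheses (h1 : subspace J1) (h2 : subspace J2) (h3 : subspace J3).

Definition candidate Ja Jb P := [/\ subspace P, incl (meet Ja Jb) P, (vdim P <= a)%N,
  (c <= vdim (meet P Ja))%N & (c <= vdim (meet P Jb))%N].

(* Lexicographic in [(vdim (meet P J3), vdim P)], as [vdim P <= N]. *)
Definition weight P := (vdim (meet P J3) * N.+1 + vdim P)%N.

Lemma candidateC Ja Jb P : candidate Ja Jb P -> candidate Jb Ja P.
Proof. by case=> hP sM *; split => // x [? ?]; apply: sM. Qed.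

Lemma weight_lt_dim P P' : (vdim (meet P' J3) <= vdim (meet P J3))%N ->
  (vdim P' < vdim P)%N -> (weight P' < weight P)%N.
Proof. by rewrite /weight => l1 l2; have := leq_mul l1 (leqnn N.+1); move: l2; clear; lia. Qed.

Lemma weight_lt_meet P P' : subspace P' ->
  (vdim (meet P' J3) < vdim (meet P J3))%N -> (weight P' < weight P)%N.
Proof.
move=> hP' lt; have := vdim_leN hP'; rewrite /weight.
by move: lt; set m' := vdim (meet P' J3); set m := vdim (meet P J3); clear; nia.
Qed.

Lemma shrink Ja Jb P z : subspace Ja -> subspace Jb -> candidate Ja Jb P ->
  P z -> ~ Jb z -> (c < vdim (meet P Ja))%N ->
  exists P', candidate Ja Jb P' /\ (weight P' < weight P)%N.
Proof.
move=> ha hb [hP sMP dP la lb] Pz nz lt.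
have [H [hH sH sHP nH dH]] :=
  exists_hyperplane (subspace_meet hP hb) hP (@meet_inclL _ _) Pz (fun h => nz h.2).
exists H; split; last by apply: weight_lt_dim; [apply: vdim_le; try exact: subspace_meet;
  move=> x [/sHP] | rewrite -dH].
split => //.
- by move=> x [xa xb]; apply: sH; split => //; apply: sMP.
- by move: dP; rewrite -dH; clear; lia.
- by have := vdim_meet_hyperplane hH hP ha sHP dH; move: lt; clear; lia.
- apply: leq_trans lb _; apply: vdim_le; try exact: subspace_meet.
  by move=> x [Px bx]; split => //; apply: sH.
Qed.

Lemma shrink_to_sum Ja Jb P : subspace Ja -> subspace Jb -> candidate Ja Jb P ->
  ~ incl P (sum_space (meet P Ja) (meet P Jb)) ->
  exists P', candidate Ja Jb P' /\ (weight P' < weight P)%N.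
Proof.
move=> ha hb [hP sMP dP la lb] /not_incl_ex [w [Pw nw]].
have hXa := subspace_meet hP ha; have hXb := subspace_meet hP hb.
have [H [hH sH sHP nH dH]] := exists_hyperplane (subspace_sum hXa hXb) hP
  (sum_min hP (@meet_inclL _ _) (@meet_inclL _ _)) Pw nw.
exists H; split; last by apply: weight_lt_dim; [apply: vdim_le; try exact: subspace_meet;
  move=> x [/sHP] | rewrite -dH].
split => //.
- by move=> x [xa xb]; apply: sH; apply: sum_l => //; split => //; apply: sMP.
- by move: dP; rewrite -dH; clear; lia.
- apply: leq_trans la _; apply: vdim_le; try exact: subspace_meet.
  by move=> x [Px ax]; split => //; apply: sH; apply: sum_l.
- apply: leq_trans lb _; apply: vdim_le; try exact: subspace_meet.
  by move=> x [Px bx]; split => //; apply: sH; apply: sum_r.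
Qed.

(* Trade a vector [z3] of [P] in [J3] for a vector [y] of [Ja] outside [P + J3]. *)
Lemma rotate Ja Jb P z3 y : subspace Ja -> subspace Jb -> candidate Ja Jb P ->
  P z3 -> J3 z3 -> ~ Jb z3 -> Ja y -> ~ sum_space P J3 y ->
  exists P', candidate Ja Jb P' /\ (weight P' < weight P)%N.
Proof.
move=> ha hb [hP sMP dP la lb] Pz z3J nz ay ny.
have [H [hH sH sHP nH dH]] :=
  exists_hyperplane (subspace_meet hP hb) hP (@meet_inclL _ _) Pz (fun h => nz h.2).
have nHy : ~ H y by move=> /sHP Py; apply: ny; apply: sum_l.
have hP' := subspace_adjoin y hH.
have dP' : vdim (adjoin H y) = vdim P by rewrite vdim_adjoin.
exists (adjoin H y); split.
  split => //; first by move=> x [xa xb]; apply: adjoin_l; apply: sH; split => //; apply: sMP.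
  - by rewrite dP'.
  - have : (vdim (adjoin (meet H Ja) y) <= vdim (meet (adjoin H y) Ja))%N.
      apply: vdim_le; [exact: subspace_adjoin (subspace_meet hH ha) | exact: subspace_meet |].
      apply: adjoin_min; first exact: subspace_meet.
        by move=> x [hx ax]; split => //; apply: adjoin_l.
      by split => //; apply: adjoin_x.
    rewrite vdim_adjoin; [|exact: subspace_meet | by case].
    by have := vdim_meet_hyperplane hH hP ha sHP dH; move: la; clear; lia.
  - apply: leq_trans lb _; apply: vdim_le; try exact: subspace_meet.
    by move=> x [Px bx]; split => //; apply: adjoin_l; apply: sH.
apply: weight_lt_meet => //; apply: (@leq_ltn_trans (vdim (meet H J3))).
  apply: vdim_le; try exact: subspace_meet.
  move=> x [hx x3]; split => //; apply: (adjoin_meet hH h3 _ hx x3).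
  by case=> u [w [hu hw e]]; apply: ny; exists u, w; split => //; apply: sHP.
apply: (@vdim_lt _ _ z3); try exact: subspace_meet.
- by move=> x [/sHP].
- by [].
- by case.
Qed.

Lemma exists_meet_notin Ja Jb P : subspace Ja -> subspace Jb -> subspace P ->
  (vdim (meet Ja Jb) < c)%N -> (c <= vdim (meet P Ja))%N -> exists z, [/\ P z, Ja z & ~ Jb z].
Proof.
move=> ha hb hP m le; apply: NNPP => h.
suff : (vdim (meet P Ja) <= vdim (meet Ja Jb))%N by move: m le; clear; lia.
apply: vdim_le; try exact: subspace_meet.
by move=> x [Px ax]; split => //; apply: NNPP => nb; apply: h; exists x.
Qed.

Variable b : nat.
Hypotheses (d1 : vdim J1 = b) (d2 : vdim J2 = b) (d3 : vdim J3 = b) (cb : (c < b)%N).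
Hypotheses (m12 : (vdim (meet J1 J2) < c)%N) (m13 : (vdim (meet J1 J3) < c)%N)
  (m23 : (vdim (meet J2 J3) < c)%N).

(* Dimension count: [J1 + J2] inside [P + J3] would force [b <= c]. *)
Lemma covered_absurd P : candidate J1 J2 P ->
  vdim (meet P J1) = c -> vdim (meet P J2) = c -> (c <= vdim (meet P J3))%N ->
  incl P (sum_space (meet P J1) (meet P J2)) ->
  incl J1 (sum_space P J3) -> incl J2 (sum_space P J3) -> False.
Proof.
case=> hP sMP _ _ _ e1 e2 ge3 sP s1 s2.
have hX1 := subspace_meet hP h1; have hX2 := subspace_meet hP h2.
have := vdim_grassmann h1 h2; have := vdim_grassmann hP h3; have := vdim_grassmann hX1 hX2.
have : (vdim (sum_space J1 J2) <= vdim (sum_space P J3))%N.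
  apply: vdim_le; [exact: subspace_sum | exact: subspace_sum |].
  exact: sum_min (subspace_sum hP h3) s1 s2.
have : (vdim P <= vdim (sum_space (meet P J1) (meet P J2)))%N.
  by apply: vdim_le => //; exact: subspace_sum.
have : (vdim (meet J1 J2) <= vdim (meet (meet P J1) (meet P J2)))%N.
  apply: vdim_le; try exact: subspace_meet.
  by move=> x [ax bx]; have Px := sMP x (conj ax bx); split; split.
by rewrite d1 d2 d3 e1 e2; move: ge3 cb; clear; lia.
Qed.

Definition separating P := [/\ subspace P, (vdim P <= a)%N, vdim (meet P J1) = c,
  vdim (meet P J2) = c & (vdim (meet P J3) < c)%N].

Lemma separating_step P : candidate J1 J2 P ->
  separating P \/ exists P', candidate J1 J2 P' /\ (weight P' < weight P)%N.
Proof.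
move=> cP; have [hP sMP dP la lb] := cP.
have [z [Pz _ nz]] := exists_meet_notin h1 h2 hP m12 la.
have [z' [Pz' _ nz']] := exists_meet_notin h2 h1 hP (ltac:(by rewrite vdim_meetC)) lb.
have [lt1|le1] := ltnP c (vdim (meet P J1)); first by right; apply: shrink cP Pz nz lt1.
have [lt2|le2] := ltnP c (vdim (meet P J2)).
  right; have [P' [cP' lt]] := shrink h2 h1 (candidateC cP) Pz' nz' lt2.
  by exists P'; split => //; apply: candidateC.
have e1 : vdim (meet P J1) = c by apply/eqP; rewrite eqn_leq le1 la.
have e2 : vdim (meet P J2) = c by apply/eqP; rewrite eqn_leq le2 lb.
have [lt3|ge3] := ltnP (vdim (meet P J3)) c; first by left.
right; case: (classic (incl P (sum_space (meet P J1) (meet P J2)))) => [sP|nsP];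
  last exact: shrink_to_sum.
have hX3 := subspace_meet hP h3.
have ge3' : (c <= vdim (meet (meet P J3) J3))%N by rewrite vdim_meet_idl // => x [].
have [z3 [[Pz3 _] z3J nz3]] := exists_meet_notin h3 h2 hX3 (ltac:(by rewrite vdim_meetC)) ge3'.
have [z3' [[Pz3' _] z3J' nz3']] := exists_meet_notin h3 h1 hX3 (ltac:(by rewrite vdim_meetC)) ge3'.
case: (classic (incl J1 (sum_space P J3))) => [s1|/not_incl_ex [y [ay ny]]];
  last exact: rotate cP Pz3 z3J nz3 ay ny.
case: (classic (incl J2 (sum_space P J3))) => [s2|/not_incl_ex [y [ay ny]]].
  by exfalso; apply: covered_absurd cP e1 e2 ge3 sP s1 s2.
have [P' [cP' lt]] := rotate h2 h1 (candidateC cP) Pz3' z3J' nz3' ay ny.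
by exists P'; split => //; apply: candidateC.
Qed.

Lemma exists_separating : (2 * c <= a + vdim (meet J1 J2))%N -> exists P, separating P.
Proof.
move=> room; have hM := subspace_meet h1 h2.
have [Y1 [hY1 sMY1 sY1 dY1]] := @exists_vdim_between _ J1 c hM h1 (@meet_inclL _ _)
  (ltac:(by rewrite d1 (ltnW m12) (ltnW cb))).
have [Y2 [hY2 sMY2 sY2 dY2]] := @exists_vdim_between _ J2 c hM h2 (@meet_inclR _ _)
  (ltac:(by rewrite d2 (ltnW m12) (ltnW cb))).
have hY := subspace_sum hY1 hY2.
have c0 : candidate J1 J2 (sum_space Y1 Y2).
  split => //; first by move=> x /sMY1; apply: sum_l.
  - have := vdim_grassmann hY1 hY2.
    have : (vdim (meet J1 J2) <= vdim (meet Y1 Y2))%N.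
      by apply: vdim_le; try exact: subspace_meet; move=> x hx; split; [apply: sMY1|apply: sMY2].
    by rewrite dY1 dY2; move: room; clear; lia.
  - rewrite -dY1; apply: vdim_le => //; first exact: subspace_meet.
    by move=> x hx; split; [apply: sum_l | apply: sY1].
  - rewrite -dY2; apply: vdim_le => //; first exact: subspace_meet.
    by move=> x hx; split; [apply: sum_r | apply: sY2].
suff descent w P : (weight P <= w)%N -> candidate J1 J2 P -> exists P, separating P.
  exact: descent _ _ (leqnn _) c0.
elim/ltn_ind: w P => w IH P le cP; have [sP|[P' [cP' lt]]] := separating_step cP.
  by exists P.
exact: IH _ (leq_trans lt le) P' (leqnn _) cP'.
Qed.

End Separation.

Section PairwiseMeets.
Variables (a c : nat) (J1 J2 J3 : V -> Prop).
Hypotheses (h1 : subspace J1) (h2 : subspace J2) (h3 : subspace J3).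

Local Notation D := (meet (meet J1 J2) J3).

Lemma triple_meet_large b (adj : nat -> Prop) :
  vdim J1 = b -> vdim J2 = b -> vdim J3 = b -> (c <= a)%N -> (c < b)%N ->
  (2 * c <= a + vdim (meet J1 J2))%N -> adj c -> (forall d, (d < c)%N -> ~ adj d) ->
  adj_closed_le adj a J1 J2 J3 -> adj_closed_le adj a J1 J3 J2 -> adj_closed_le adj a J2 J3 J1 ->
  (c <= vdim D)%N.
Proof.
move=> d1 d2 d3 ca cb room adjc adjlt cl123 cl132 cl231.
have [->//|c0] := posnP c; have c0a : (0 < c <= a)%N by rewrite c0 ca.
have hD := subspace_meet (subspace_meet h1 h2) h3.
have large J J' : subspace J -> subspace J' -> incl (meet J J') D ->
    (c <= vdim (meet J J'))%N -> (c <= vdim D)%N.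
  by move=> hJ hJ' sD le; apply: leq_trans le (vdim_le (subspace_meet hJ hJ') hD sD).
have [l12|le] := ltnP (vdim (meet J1 J2)) c; last first.
  have s12 := meet2_incl h1 h2 h3 adjc adjlt cl123 c0a le.
  by apply: (large _ _ h1 h2 _ le) => x hx; split => //; apply: s12.
have [l13|le] := ltnP (vdim (meet J1 J3)) c; last first.
  have s13 := meet2_incl h1 h3 h2 adjc adjlt cl132 c0a le.
  by apply: (large _ _ h1 h3 _ le) => x [x1 x3]; split => //; split => //; apply: s13.
have [l23|le] := ltnP (vdim (meet J2 J3)) c; last first.
  have s23 := meet2_incl h2 h3 h1 adjc adjlt cl231 c0a le.
  by apply: (large _ _ h2 h3 _ le) => x [x2 x3]; split => //; split => //; apply: s23.
have [P [hP dP e1 e2 lt3]] := exists_separating h1 h2 h3 d1 d2 d3 cb l12 l13 l23 room.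
by case: (adjlt _ lt3); apply: cl123 => //; rewrite ?e1 ?e2.
Qed.

(* Witness: a [c]-space of [D] plus a vector of [J3] outside [J1] and [J2]. *)
Lemma eq_closed_absurd : adj_closed_le (fun d => d = c) a J1 J2 J3 -> (c < a)%N ->
  (c <= vdim D)%N -> ~ incl J3 J1 -> ~ incl J3 J2 -> False.
Proof.
move=> cl ca cD n31 n32.
have hD := subspace_meet (subspace_meet h1 h2) h3.
have [Q [hQ sQD dQ]] := exists_vdim_sub hD cD.
have [x [x3 nx1 nx2]] := avoid_two h3 h1 h2 (not_incl_ex n31) (not_incl_ex n32).
have sQ1 : incl Q J1 by move=> y /sQD [[]].
have sQ2 : incl Q J2 by move=> y /sQD [[]].
have sQ3 : incl Q J3 by move=> y /sQD [].
have hP := subspace_adjoin x hQ.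
have dP : vdim (adjoin Q x) = c.+1 by rewrite vdim_adjoin ?dQ // => /sQ1.
have := cl _ hP (ltac:(by rewrite dP)).
rewrite (vdim_meet_adjoin hQ h1) // (vdim_meet_adjoin hQ h2) // dQ => /(_ erefl erefl).
by rewrite vdim_meet_idl //; [rewrite dP; lia | apply: adjoin_min].
Qed.

Lemma ge_closed_adjoin : adj_closed_le (fun d => c <= d)%N a J1 J2 J3 ->
  (0 < c)%N -> (c < a)%N -> (c <= (vdim D).+1)%N ->
  forall x1, J1 x1 -> ~ J3 x1 -> incl J2 (adjoin J3 x1).
Proof.
move=> cl c0 ca cD x1 a1 n1; apply: NNPP => /not_incl_ex [x2 [b2 n2]].
have hD := subspace_meet (subspace_meet h1 h2) h3.
have [Q [hQ sQD dQ]] := exists_vdim_sub hD (ltac:(by move: cD; clear; lia) : (c.-1 <= vdim D)%N).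
have sQ1 : incl Q J1 by move=> y /sQD [[]].
have sQ2 : incl Q J2 by move=> y /sQD [[]].
have sQ3 : incl Q J3 by move=> y /sQD [].
have h31 := subspace_adjoin x1 h3.
have s31 : incl J3 (adjoin J3 x1) by move=> y; apply: adjoin_l.
have hQ1 := subspace_adjoin x1 hQ; have hQ2 := subspace_adjoin x2 hQ.
have sQ1J : incl (adjoin Q x1) (adjoin J3 x1).
  by apply: adjoin_min => //; [move=> y /sQ3 /s31 | apply: adjoin_x].
have hP := subspace_adjoin x2 hQ1.
have dQ1 : vdim (adjoin Q x1) = c by rewrite vdim_adjoin // ?dQ; [lia | move=> /sQ3].
have dQ2 : vdim (adjoin Q x2) = c by rewrite vdim_adjoin // ?dQ; [lia | move=> /sQ3 /s31].
have dP : vdim (adjoin (adjoin Q x1) x2) = c.+1 by rewrite vdim_adjoin ?dQ1 // => /sQ1J.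
set P := adjoin (adjoin Q x1) x2.
have large J Y : subspace J -> subspace Y -> incl Y J -> incl Y P -> vdim Y = c ->
    (c <= vdim (meet P J))%N.
  move=> hJ hY sYJ sYP dY; rewrite -dY; apply: vdim_le => //; first exact: subspace_meet.
  by move=> y Yy; split; [apply: sYP | apply: sYJ].
have l1 : (c <= vdim (meet P J1))%N.
  by apply: (large _ _ h1 hQ1 (adjoin_min h1 sQ1 a1) _ dQ1) => y; apply: adjoin_l.
have l2 : (c <= vdim (meet P J2))%N.
  apply: (large _ _ h2 hQ2 (adjoin_min h2 sQ2 b2) _ dQ2).
  by apply: adjoin_min hP _ (adjoin_x _ hQ1) => y Qy; do 2 apply: adjoin_l.
have l3 : (vdim (meet P J3) <= vdim Q)%N.
  apply: vdim_le => //; first exact: subspace_meet.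
  move=> y [Py y3]; apply: (adjoin_meet hQ h3 _ _ y3).
    by move=> /(sum_min h3 sQ3 (fun z h => h)) /n1.
  apply: (adjoin_meet hQ1 h3 _ Py y3).
  by move=> /(sum_min h31 sQ1J s31) /n2.
by have /= := cl _ hP (ltac:(by rewrite dP)) l1 l2; move: l3; rewrite dQ /P; clear -c0; lia.
Qed.

Lemma ge_closed_pencil b : vdim J1 = b -> vdim J2 = b -> vdim J3 = b ->
  (0 < c)%N -> (c < a)%N -> (c < b)%N -> (2 * c <= a + vdim (meet J1 J2))%N ->
  adj_closed_le (fun d => c <= d)%N a J1 J2 J3 -> adj_closed_le (fun d => c <= d)%N a J1 J3 J2 ->
  adj_closed_le (fun d => c <= d)%N a J2 J3 J1 -> ~ incl J1 J3 -> ~ incl J2 J3 ->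
  vdim D = b.-1 /\
  exists x1, [/\ J1 x1, ~ J3 x1, incl J1 (adjoin J3 x1) & incl J2 (adjoin J3 x1)].
Proof.
move=> d1 d2 d3 c0 ca cb room cl123 cl132 cl231 n13 n23.
have adjlt d : (d < c)%N -> ~ (c <= d)%N by rewrite ltnNge => /negP.
have cD := triple_meet_large d1 d2 d3 (ltnW ca) cb room (leqnn c) adjlt cl123 cl132 cl231.
have into_adjoin := ge_closed_adjoin cl123 c0 ca (leqW cD).
have [x1 [a1 nx1]] := not_incl_ex n13.
have hS := subspace_adjoin x1 h3.
have s3S : incl J3 (adjoin J3 x1) by move=> y; apply: adjoin_l.
have s1S : incl J1 (adjoin J3 x1).
  apply: NNPP => /not_incl_ex [x1' [a1' nx1']].
  have nx1'' : ~ J3 x1' by move=> /s3S.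
  apply: n23 => y y2; apply: (adjoin_meet h3 hS _ (into_adjoin x1' a1' nx1'' y y2)).
    by move=> /(sum_min hS s3S (fun z h => h)).
  exact: into_adjoin x1 a1 nx1 y y2.
split; last by exists x1; split => //; apply: into_adjoin.
have := vdim_grassmann h1 h3.
have : (vdim (sum_space J1 J3) <= vdim (adjoin J3 x1))%N.
  by apply: vdim_le => //; [exact: subspace_sum | exact: sum_min].
have : (vdim (meet J1 J3) < vdim J1)%N.
  by apply: (@vdim_lt _ _ x1) => //; [exact: subspace_meet | move=> x [] | case].
rewrite vdim_adjoin // d1 d3 => l1 l2 g.
have e13 : vdim (meet J1 J3) = b.-1 by move: g l1 l2; clear; lia.
have s13 : incl (meet J1 J3) J2.
  apply: (meet2_incl h1 h3 h2 (leqnn c) adjlt cl132); first by rewrite c0 ltnW.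
  by rewrite e13; move: cb; clear; lia.
rewrite -e13; apply: vdim_ext; first exact: subspace_meet (subspace_meet h1 h2) h3.
by move=> x; split=> [[[? ?] ?] | [x1' x3]]; split => //; split => //; apply: s13.
Qed.

End PairwiseMeets.

(** * Translation to projective dimensions *)

Lemma has_vdim_iff d S : has_vdim d S <-> subspace S /\ vdim S = d.
Proof.
split.
  case=> v [/lin_indep_seq hi e].
  have hb : is_basis S (fam_seq v) by split => // x; rewrite e in_span_seq.
  by split; [exact: is_basis_subspace hb | rewrite (vdim_basis hb) size_fam_seq].
case=> hS dS; have [s [hs es]] := exists_basis hS.
have ds : size s = d by rewrite -dS (vdim_basis (conj hs es)).
have fs : fam_seq (fun i : 'I_d => nth 0 s i) = s.
  have -> : fam_seq (fun i : 'I_d => nth 0 s i) = map (nth 0 s) (map val (enum 'I_d)).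
    by rewrite /fam_seq -map_comp.
  by rewrite val_enum_ord -ds; exact: mkseq_nth.
exists (fun i : 'I_d => nth 0 s i); split; first by apply/lin_indep_seq; rewrite fs.
by move=> x; rewrite in_span_seq fs.
Qed.

Lemma is_pspace_iff (m : int) S : is_pspace m S <-> subspace S /\ (vdim S)%:Z = m + 1.
Proof.
split; first by case=> d [e /has_vdim_iff [hS dS]]; split => //; rewrite dS.
by case=> hS e; exists (vdim S); split => //; apply/has_vdim_iff.
Qed.

Lemma is_pspace_nat (m : nat) S : is_pspace m S <-> subspace S /\ vdim S = m.+1.
Proof. by rewrite is_pspace_iff; split; case=> hS e; split => //; move: e; clear; lia. Qed.

Lemma adj_ge_vdim (c : nat) I J : subspace I -> subspace J ->
  adj_ge (c%:Z - 1) I J <-> (c <= vdim (meet I J))%N.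
Proof.
move=> hI hJ; split; first by case=> m [km /is_pspace_iff [_ e]]; move: km e; clear; lia.
move=> le; exists ((vdim (meet I J))%:Z - 1); split; first by move: le; clear; lia.
by apply/is_pspace_iff; split; [exact: subspace_meet | clear; lia].
Qed.

Lemma adj_eq_vdim (c : nat) I J : subspace I -> subspace J ->
  adj_eq (c%:Z - 1) I J <-> vdim (meet I J) = c.
Proof.
move=> hI hJ; rewrite /adj_eq is_pspace_iff; split; first by case=> _; clear; lia.
by move=> e; split; [exact: subspace_meet | rewrite e; clear; lia].
Qed.

Lemma span3_adjoin J1 J2 J3 x1 : subspace J3 -> J1 x1 ->
  incl J1 (adjoin J3 x1) -> incl J2 (adjoin J3 x1) -> same_space (span3 J1 J2 J3) (adjoin J3 x1).
Proof.
move=> h3 a1 s1 s2 x; split.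
  by apply; [exact: subspace_adjoin | move=> y [/s1|[/s2|/adjoin_l]]].
move=> hx U hU hJ; apply: adjoin_min hx => //; last by apply: hJ; left.
by move=> y y3; apply: hJ; right; right.
Qed.

Section RoundUpTriple.
Variables (Gamma : (V -> Prop) -> (V -> Prop) -> Prop) (i j : nat) (J1 J2 J3 : V -> Prop).
Hypothesis RU : round_up_triple Gamma i j J1 J2 J3.

Lemma round_up_spaces :
  [/\ subspace J1 /\ vdim J1 = j.+1, subspace J2 /\ vdim J2 = j.+1
    & subspace J3 /\ vdim J3 = j.+1].
Proof. by case: RU => /is_pspace_nat ? /is_pspace_nat ? /is_pspace_nat ?. Qed.

Lemma round_up_not_incl : [/\ ~ incl J1 J3, ~ incl J2 J3, ~ incl J3 J1 & ~ incl J3 J2].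
Proof.
have [[h1 d1] [h2 d2] [h3 d3]] := round_up_spaces.
have [_ _ _ [n12 n13 n23] _] := RU.
have not_incl S T : subspace S -> subspace T -> vdim S = vdim T -> ~ same_space S T ->
    ~ incl S T.
  move=> hS hT e ne st; apply: ne => x; split; first exact: st.
  by apply: (incl_of_vdim hS hT st); rewrite e.
have symm S T : ~ same_space S T -> ~ same_space T S by move=> ne e; apply: ne => x; rewrite e.
by split; apply: not_incl; rewrite ?d1 ?d2 ?d3 //; apply: symm.
Qed.

Lemma round_up_room c :
  (forall I J, subspace I -> subspace J -> Gamma I J -> (c <= vdim (meet I J))%N) ->
  (2 * c <= i.+1 + vdim (meet J1 J2))%N.
Proof.
move=> adjc; have [[h1 _] [h2 _] _] := round_up_spaces.
have [_ _ _ _ [_ [I [/is_pspace_nat [hI <-] g1 g2 _]]]] := RU.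
exact: adjacent_pair_bound hI h1 h2 (adjc _ _ hI h1 g1) (adjc _ _ hI h2 g2).
Qed.

Lemma round_up_adj_closed (adj : nat -> Prop) :
  (forall I J, subspace I -> subspace J -> Gamma I J <-> adj (vdim (meet I J))) ->
  [/\ adj_closed adj i.+1 J1 J2 J3, adj_closed adj i.+1 J1 J3 J2 & adj_closed adj i.+1 J2 J3 J1].
Proof.
move=> hG; have [[h1 _] [h2 _] [h3 _]] := round_up_spaces.
have [_ _ _ _ [nex _]] := RU.
suff close Ja Jb Jc : subspace Ja -> subspace Jb -> subspace Jc ->
    (forall I, is_pspace i I -> Gamma I Ja -> Gamma I Jb -> Gamma I Jc) ->
    adj_closed adj i.+1 Ja Jb Jc.
  split; apply: close => // I /nex no g g'; apply: NNPP => ng; apply: no.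
  - by apply: Or31.
  - by apply: Or32.
  - by apply: Or33.
move=> ha hb hc cl I hI dI ga gb; apply/(hG _ _ hI hc).
by apply: cl; [apply/is_pspace_nat | apply/(hG _ _ hI ha) | apply/(hG _ _ hI hb)].
Qed.

End RoundUpTriple.

Lemma round_up_ge_regular i j c (J1 J2 J3 : V -> Prop) :
  (0 < c)%N -> (c <= i)%N -> (c <= j)%N -> (i.+1 + j.+1 <= N)%N ->
  round_up_triple (adj_ge (c%:Z - 1)) i j J1 J2 J3 ->
  is_pspace (j%:Z - 1) (meet (meet J1 J2) J3) /\ is_pspace (j%:Z + 1) (span3 J1 J2 J3).
Proof.
move=> c0 ci cj ij RU.
have [[h1 d1] [h2 d2] [h3 d3]] := round_up_spaces RU.
have [n13 n23 _ _] := round_up_not_incl RU.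
have hG := @adj_ge_vdim c.
have room := round_up_room RU (fun I J hI hJ => (hG I J hI hJ).1).
have [cl123 cl132 cl231] := round_up_adj_closed RU (adj := fun d => c <= d)%N hG.
have cl Ja Jb Jc : subspace Ja -> subspace Jb -> subspace Jc -> vdim Jc = j.+1 ->
    adj_closed (fun d => c <= d)%N i.+1 Ja Jb Jc ->
    adj_closed_le (fun d => c <= d)%N i.+1 Ja Jb Jc.
  by move=> ha hb hc dc; apply: ge_closed_le ha hb hc (eq_leq dc) ij.
have [dD [x1 [a1 nx1 s1 s2]]] := ge_closed_pencil h1 h2 h3 d1 d2 d3 c0
  (ci : c < i.+1)%N (cj : c < j.+1)%N room (cl _ _ _ h1 h2 h3 d3 cl123)
  (cl _ _ _ h1 h3 h2 d2 cl132) (cl _ _ _ h2 h3 h1 d1 cl231) n13 n23.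
have e := span3_adjoin h3 a1 s1 s2.
have hS := subspace_ext e (subspace_adjoin x1 h3).
split; apply/is_pspace_iff; split => //; first exact: subspace_meet (subspace_meet h1 h2) h3.
  by rewrite dD; clear; lia.
by rewrite (vdim_ext hS e) vdim_adjoin // d3; clear; lia.
Qed.

Lemma round_up_eq_absurd (t : L) i j c (J1 J2 J3 : V -> Prop) : t != 0 -> t != 1 ->
  (c <= i)%N -> (c <= j)%N -> (i.+1 + j.+1 <= N)%N ->
  ~ round_up_triple (adj_eq (c%:Z - 1)) i j J1 J2 J3.
Proof.
move=> t0 t1 ci cj ij RU.
have [[h1 d1] [h2 d2] [h3 d3]] := round_up_spaces RU.
have [_ _ n31 n32] := round_up_not_incl RU.
have hG := @adj_eq_vdim c.
have room := round_up_room RU (fun I J hI hJ g => eq_leq (esym ((hG I J hI hJ).1 g))).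
have [cl123 cl132 cl231] := round_up_adj_closed RU (adj := fun d => d = c) hG.
have cl Ja Jb Jc : subspace Ja -> subspace Jb -> subspace Jc -> vdim Ja = j.+1 ->
    vdim Jb = j.+1 -> vdim Jc = j.+1 -> adj_closed (fun d => d = c) i.+1 Ja Jb Jc ->
    adj_closed_le (fun d => d = c) i.+1 Ja Jb Jc.
  by move=> ha hb hc da db dc; apply: eq_closed_le t0 t1 ha hb hc _ _ _ ij; apply: eq_leq.
have adjlt d : (d < c)%N -> d <> c by move=> lt e; rewrite e ltnn in lt.
have cl123' := cl _ _ _ h1 h2 h3 d1 d2 d3 cl123.
have cD := triple_meet_large h1 h2 h3 d1 d2 d3 (leqW ci) (cj : c < j.+1)%N room erefl adjlt
  cl123' (cl _ _ _ h1 h3 h2 d1 d3 d2 cl132) (cl _ _ _ h2 h3 h1 d2 d3 d1 cl231).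
exact: eq_closed_absurd h1 h2 h3 cl123' (ci : c < i.+1)%N cD n31 n32.
Qed.

End SkewProjectiveSpace.

Lemma exists_neq01 (L : unitRingType) : ~ (exists f : L -> bool, bijective f) ->
  exists t : L, t != 0 /\ t != 1.
Proof.
move=> nb; apply: NNPP => h; apply: nb; exists (fun x : L => x == 1).
have L01 (x : L) : x = 0 \/ x = 1.
  by apply: NNPP => n; apply: h; exists x; split; apply/eqP => e; apply: n; [left|right].
apply: (@Bijective _ _ _ (fun b : bool => if b then (1 : L) else 0)).
  by move=> x; case: (L01 x) => ->; rewrite ?eqxx // eq_sym oner_eq0.
by case => /=; rewrite ?eqxx // eq_sym oner_eq0.
Qed.

Theorem lemma3p9 (L : unitRingType) (HL : skew_field L) (n i j : nat) (k : int)
  (Gamma : ('rV[L]_n.+1 -> Prop) -> ('rV[L]_n.+1 -> Prop) -> Prop)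
  (HGamma :
     (* type II *)
     [/\ 0 <= k, k < (minn i j)%:Z, i%:Z + j%:Z <= n%:Z - 1 & Gamma = @adj_ge L n.+1 k]
     \/
     (* type III *)
     [/\ -1 <= k, k < (minn i j)%:Z, i%:Z + j%:Z <= n%:Z - 1,
         ~ (exists f : L -> bool, bijective f) & Gamma = @adj_eq L n.+1 k])
  (J1 J2 J3 : 'rV[L]_n.+1 -> Prop) :
  round_up_triple Gamma i j J1 J2 J3 ->
  is_pspace (j%:Z - 1) (meet (meet J1 J2) J3) /\ is_pspace (j%:Z + 1) (span3 J1 J2 J3).
Proof.
have [km1 kmin hij] : [/\ -1 <= k, k < (minn i j)%:Z & i%:Z + j%:Z <= n%:Z - 1].
  by case: HGamma => [[k0 ? ? _]|[? ? ? _ _]]; split => //; apply: le_trans k0.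
have [c kc] : exists c : nat, k = c%:Z - 1 by exists (absz (k + 1)); move: km1; clear; lia.
subst k.
have ci : (c <= i)%N by move: kmin; clear; lia.
have cj : (c <= j)%N by move: kmin; clear; lia.
have ij : (i.+1 + j.+1 <= n.+1)%N by move: hij; clear; lia.
case: HGamma => [[k0 _ _ ->]|[_ _ _ nb ->]].
  by apply: round_up_ge_regular => //; move: k0; clear; lia.
by have [t [t0 t1]] := exists_neq01 nb; move/(round_up_eq_absurd HL t0 t1 ci cj ij).
Qed.
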